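(* The number of distinct central characters $\phi_{1,s}:Z(H_1)\to\mathbb C$ ($s\in T$) which admit one-dimensional representations (i.e. such that $H_{1,s}$ has a one-dimensional representation) equals the cardinality of the center of $G$.
   Context: Let $R$ be an irreducible root system of rank $n$ with positive roots $R^+$, Weyl group $W_0$, weight lattice $X$; $W=W_0\ltimes X$ is the extended affine Weyl group with length function $l$ (for $w\in W_0,x\in X$: $l(wx)=\sum_{\alpha\in R^+,w(\alpha)\in R^-}|\langle x,\alpha^\vee\rangle+1|+\sum_{\alpha\in R^+,w(\alpha)\in R^+}|\langle x,\alpha^\vee\rangle|$), $S$ the set of length-one elements of $W_0\ltimes\mathbb ZR$. $H_q$ ($q\in\mathbb C^*$) is the $\mathbb C$-algebra with basis $T_w$ ($w\in W$), relations $(T_r-q)(T_r+1)=0$ ($r\in S$), $T_wT_u=T_{wu}$ if $l(wu)=l(w)+l(u)$; $H_1=\mathbb C[W]$. Let $X^+=\{x\in X: l(wx)=l(w)+l(x)\ \forall w\in W_0\}$. Fix a square root $q^{1/2}$. For $x\in X$ write $x=yz^{-1}$ with $y,z\in X^+$ and set $\theta_x=q^{(l(z)-l(y))/2}T_yT_z^{-1}$ (independent of the choice). For $x\in X^+$ let $S_x=\sum_{y\in W_0\cdot x}\theta_y$; these span the center $Z(H_q)$. Let $G$ be a simply connected simple complex algebraic group with root system $R$, maximal torus $T$, so $X=\mathrm{Hom}(T,\mathbb C^* )$ and $W_0=N_G(T)/T$. For $s\in T$, $\phi_{q,s}:Z(H_q)\to\mathbb C$ is the restriction of the algebra map $\theta_x\mapsto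 x(s)$ on the span of the $\theta_x$; $I_{q,s}$ is the two-sided ideal generated by $S_x-\phi_{q,s}(S_x)$, $x\in X^+$, and $H_{q,s}=H_q/I_{q,s}$. *)

From HB Require Import structures.
From mathcomp Require Import all_boot all_order all_algebra.
From Stdlib Require Import ClassicalEpsilon.
Set Implicit Arguments. Unset Strict Implicit. Unset Printing Implicit Defensive.
Import Order.TTheory GRing.Theory Num.Theory.
Local Open Scope ring_scope.

(* Root datum of a simply connected simple group, encoded by its       *)
(* Cartan matrix A, with convention  A i j = < alpha_i^vee , alpha_j >. *)
(* The weight lattice X is Z^n (column vectors) in the basis of the    *)
(* fundamental weights omega_i; simple coroots are the dual basis, so  *)
(* < x , alpha_i^vee > = x_i.  Simple root alpha_j has coordinates     *)
(* (A i j)_i.                                                          *)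

(* A is the Cartan matrix of an irreducible (reduced) root system:     *)
(* generalized Cartan matrix, indecomposable, symmetrizable with a     *)
(* positive definite symmetrization (finite type).                     *)
Definition cartan_irreducible (n : nat) (A : 'M[int]_n) : Prop :=
  [/\ (forall i, A i i = 2),
      (forall i j, i != j -> A i j <= 0),
      (forall i j, A i j = 0 <-> A j i = 0),
      (forall P : {set 'I_n},
          (forall i j, i \in P -> j \notin P -> A i j = 0) ->
          P = set0 \/ P = setT) &
      exists d : 'I_n -> rat,
        [/\ (forall i, 0 < d i),
            (forall i j, d i * (A i j)%:~R = d j * (A j i)%:~R) &
            (forall v : 'I_n -> rat, (exists i, v i != 0) ->
               0 < \sum_i \sum_j v i * d i * (A i j)%:~R * v j)]].

Definition alpha (n : nat) (A : 'M[int]_n) (j : 'I_n) : 'cV[int]_n :=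
  \col_i A i j.

Definition sref (n : nat) (A : 'M[int]_n) (i : 'I_n) : 'M[int]_n :=
  1%:M - alpha A i *m (delta_mx (ord0 : 'I_1) i).

(* the finite Weyl group W_0, as the group of matrices generated by the
   simple reflections (acting on X by left multiplication) *)
Inductive W0 (n : nat) (A : 'M[int]_n) : 'M[int]_n -> Prop :=
  | W0_one : W0 A 1%:M
  | W0_gen i w : W0 A w -> W0 A (sref A i *m w).

Definition is_root (n : nat) (A : 'M[int]_n) (a : 'cV[int]_n) : Prop :=
  exists w j, W0 A w /\ a = w *m alpha A j.

Definition in_orbit (n : nat) (A : 'M[int]_n) (x y : 'cV[int]_n) : Prop :=
  exists w, W0 A w /\ y = w *m x.

Definition dominant (n : nat) (x : 'cV[int]_n) : bool :=
  [forall i, 0 <= x i ord0].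

(* sum of f over the (finite) orbit W_0 . x  (0 if the orbit were infinite) *)
Definition orbit_sum (n : nat) (A : 'M[int]_n) (R : nmodType)
    (x : 'cV[int]_n) (f : 'cV[int]_n -> R) : R :=
  match excluded_middle_informative
          (exists l : seq 'cV[int]_n,
              uniq l /\ forall y, y \in l <-> in_orbit A x y) with
  | left H => \sum_(y <- proj1_sig (constructive_indefinite_description _ H)) f y
  | right _ => 0
  end.

(* the torus T = Hom(X, F^x) = (F^x)^n, and the character x(s) *)
Definition torus (n : nat) (F : fieldType) (s : 'rV[F]_n) : Prop :=
  forall i, s ord0 i != 0.

Definition ev (n : nat) (F : fieldType) (x : 'cV[int]_n) (s : 'rV[F]_n) : F :=
  \prod_i (s ord0 i) ^ (x i ord0).

(* central character phi_{1,s} : Z(H_1) -> F, recorded by its values on the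
   spanning family S_x (x in X^+):  phi_{1,s}(S_x) = sum_{y in W_0 x} y(s). *)
Definition cchar (n : nat) (A : 'M[int]_n) (F : fieldType) (s : 'rV[F]_n)
    : 'cV[int]_n -> F :=
  fun x => if dominant x then orbit_sum A x (fun y => ev y s) else 0.

(* H_{1,s} = C[W] / I_{1,s} has a one-dimensional representation:
   a unital algebra map rho : H_1 = C[W] -> F killing the generators
   S_x - phi_{1,s}(S_x) of I_{1,s}.  Elements of W = W_0 |x X are pairs
   (x, w) standing for t_x w (x in X, w in W_0), with product
   (t_x w)(t_x' w') = t_(x + w x') (w w');  chi x w = rho(T_{t_x w}).
   At q = 1, theta_y = T_{t_y}, so rho(S_x) = sum_{y in W_0 x} chi y 1. *)
Definition admits_1dim (n : nat) (A : 'M[int]_n) (F : fieldType)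
    (s : 'rV[F]_n) : Prop :=
  exists chi : 'cV[int]_n -> 'M[int]_n -> F,
    [/\ chi 0 1%:M = 1,
        (forall x w x' w', W0 A w -> W0 A w' ->
            chi (x + w *m x') (w *m w') = chi x w * chi x' w') &
        (forall x, dominant x ->
            orbit_sum A x (fun y => chi y 1%:M) = orbit_sum A x (fun y => ev y s))].

(* the centre of G, as the subgroup of T:  Z(G) = { s in T | alpha(s) = 1
   for all roots alpha } *)
Definition center_G (n : nat) (A : 'M[int]_n) (F : fieldType) (s : 'rV[F]_n)
    : Prop :=
  torus s /\ forall a, is_root A a -> ev a s = 1.

Definition card_is (T : Type) (P : T -> Prop) (k : nat) : Prop :=
  exists f : 'I_k -> T, injective f /\ forall t, P t <-> exists i, f i = t.

(* A one-dimensional representation of H_{1,s} restricts on the lattice X to a character t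
   with t (s_i x) = t x (conjugate t_x by s_i), so t kills the simple roots and is evaluation
   at a point z of Z(G) having the same central character as s; conversely t_x w |-> x(z) is a
   one-dimensional representation for every z in Z(G).  The central character of z in Z(G)
   determines z: on the fundamental weight omega_i it equals |W_0 omega_i| z_i, and
   |W_0 omega_i| is invertible in characteristic 0.  Z(G) is finite since z_i ^ det A = 1, and
   W_0-orbits are finite since they lie on a level set of the positive definite W_0-invariant
   form obtained by symmetrizing the Cartan matrix. *)

From Pilot Require Import Defs.
From mathcomp Require Import all_boot all_order all_algebra.
From mathcomp Require Import boolp ring zify.
From Stdlib Require Import ClassicalEpsilon.
Set Implicit Arguments. Unset Strict Implicit. Unset Printing Implicit Defensive.
Import Order.TTheory GRing.Theory Num.Theory.
Local Open Scope ring_scope.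

Lemma uniq_enum_of_cover (T : eqType) (P : T -> Prop) (L : seq T) :
  (forall t, P t -> t \in L) -> exists2 l : seq T, uniq l & forall t, t \in l <-> P t.
Proof.
move=> PL; exists (undup [seq t <- L | `[< P t >]]); first exact: undup_uniq.
move=> t; rewrite mem_undup mem_filter; split; first by case/andP=> /asboolP.
by move=> Pt; rewrite PL // andbT; apply/asboolP.
Qed.

Lemma card_is_uniq (T : eqType) (P : T -> Prop) (l : seq T) :
  uniq l -> (forall t, t \in l <-> P t) -> card_is P (size l).
Proof.
move=> ul lP; exists (tnth (in_tuple l)); split.
- move=> i j; case: l ul lP i j => [|x0 l'] ul _ i j; first by case: i.
  rewrite !(tnth_nth x0) => /eqP; rewrite nth_uniq // => /eqP; exact: val_inj.
- move=> t; split; first by move/lP/(tnthP (in_tuple l)) => [i ->]; exists i.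
  by move=> [i <-]; apply/lP; exact: mem_tnth.
Qed.

Lemma card_is_image (T U : Type) (P : T -> Prop) (Q : U -> Prop) (g : T -> U) k :
  card_is P k -> (forall t1 t2, P t1 -> P t2 -> g t1 = g t2 -> t1 = t2) ->
  (forall u, Q u <-> exists2 t, P t & u = g t) -> card_is Q k.
Proof.
move=> [f [f_inj fP]] g_inj gQ; exists (g \o f); split.
- move=> i j /= /g_inj e; apply: f_inj; apply: e; apply/fP; by eexists.
- move=> u; rewrite gQ; split; first by move=> [t /fP [i <-] ->]; exists i.
  by move=> [i <-]; exists (f i) => //; apply/fP; exists i.
Qed.

Lemma mx_cover (T : eqType) (x0 : T) (rs : seq T) m p :
  exists L : seq 'M[T]_(m, p), forall M : 'M_(m, p), (forall i j, M i j \in rs) -> M \in L.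
Proof.
exists [seq \matrix_(i, j) nth x0 rs (f (i, j)) | f : {ffun 'I_m * 'I_p -> 'I_(size rs)}].
move=> M Mrs; have idx i j : (index (M i j) rs < size rs)%N by rewrite index_mem.
apply/imageP; exists [ffun ij => Ordinal (idx ij.1 ij.2)] => //.
by apply/matrixP => i j; rewrite mxE ffunE nth_index.
Qed.

Lemma int_bounded_cover (M : int) :
  exists rs : seq int, forall z, `|z| <= M -> z \in rs.
Proof.
exists [seq k%:Z - `|M|%:Z | k <- iota 0 (`|M| * 2).+1].
move=> z zM; apply/mapP; exists (absz (z + `|M|%:Z)); last by lia.
rewrite mem_iota; lia.
Qed.

Lemma int_norm_le_sqr (z : int) : `|z| <= z ^+ 2.
Proof. rewrite expr2; nia. Qed.

Lemma roots_of_unity_cover (F : closedFieldType) m :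
  (0 < m)%N -> exists rs : seq F, forall z, z ^+ m = 1 -> z \in rs.
Proof.
move=> m_gt0; pose p : {poly F} := 'X^m - 1.
have [rs p_split] := closed_field_poly_normal p.
exists rs => z zm1; have : root p z by rewrite /root !hornerE zm1 subrr.
rewrite p_split rootZ ?root_prod_XsubC //.
by rewrite (eqP (monicXnsubC 1 m_gt0)) oner_eq0.
Qed.

Definition omega n (i : 'I_n) : 'cV[int]_n := delta_mx i ord0.

Lemma omega_decomp n (x : 'cV[int]_n) : x = \sum_i x i ord0 *: omega i.
Proof. by rewrite {1}[x]matrix_sum_delta; apply: eq_bigr => i _; rewrite big_ord1. Qed.

Definition is_char n (F : fieldType) (t : 'cV[int]_n -> F) :=
  t 0 = 1 /\ {morph t : x y / x + y >-> x * y}.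

Section Characters.
Variables (n : nat) (F : fieldType) (t : 'cV[int]_n -> F).
Hypothesis t_char : is_char t.

Lemma char_neq0 x : t x != 0.
Proof.
have [t0 tD] := t_char; apply/eqP => tx0.
by move: (tD (- x) x); rewrite addNr t0 tx0 mulr0 => /eqP; rewrite oner_eq0.
Qed.

Lemma charN x : t (- x) = (t x)^-1.
Proof.
have [t0 tD] := t_char.
by apply: (mulIf (char_neq0 x)); rewrite -tD addNr t0 mulVf ?char_neq0.
Qed.

Lemma charZ x (m : int) : t (m *: x) = t x ^ m.
Proof.
have [t0 tD] := t_char.
have charZn (k : nat) : t (k%:Z *: x) = t x ^ k%:Z.
  elim: k => [|k IH]; first by rewrite scale0r t0 expr0z.
  by rewrite intS scalerDl scale1r tD IH -exprSz intS.
case: m => k; first exact: charZn.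
by rewrite NegzE scaleNr charN charZn invr_expz.
Qed.

Lemma char_sum (I : Type) (r : seq I) (P : pred I) (f : I -> 'cV[int]_n) :
  t (\sum_(i <- r | P i) f i) = \prod_(i <- r | P i) t (f i).
Proof. by have [t0 tD] := t_char; apply: (big_morph t tD t0). Qed.

Lemma char_torus : torus (\row_i t (omega i)).
Proof. by move=> i; rewrite mxE char_neq0. Qed.

Lemma charE x : t x = ev x (\row_i t (omega i)).
Proof.
rewrite {1}(omega_decomp x) char_sum /ev.
by apply: eq_bigr => i _; rewrite charZ mxE.
Qed.

End Characters.

Lemma ev_char n (F : fieldType) (s : 'rV[F]_n) :
  torus s -> is_char (fun x => ev x s).
Proof.
move=> s_torus; split; first by rewrite /ev big1 // => i _; rewrite mxE expr0z.
by move=> x y; rewrite /ev -big_split; apply: eq_bigr => i _; rewrite mxE expfzDr.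
Qed.

Lemma ev_omega n (F : fieldType) (s : 'rV[F]_n) i : ev (omega i) s = s ord0 i.
Proof.
rewrite /ev (bigD1 i) //= mxE eqxx expr1z big1 ?mulr1 // => j /negbTE ji.
by rewrite mxE ji expr0z.
Qed.

Section Reflections.
Variables (n : nat) (A : 'M[int]_n).

Lemma srefE i x : sref A i *m x = x - x i ord0 *: alpha A i.
Proof.
rewrite /sref mulmxBl mul1mx -mulmxA -rowE.
have -> : row i x = (x i ord0)%:M by apply/matrixP => a b; rewrite !mxE !ord1 eqxx.
by rewrite mul_mx_scalar.
Qed.

Lemma sref_invol i : A i i = 2 -> sref A i *m sref A i = 1%:M.
Proof.
move=> Aii; rewrite {2}/sref mulmxBr mulmx1 mulmxA srefE {2}/alpha mxE Aii.
have -> : alpha A i - 2 *: alpha A i = - alpha A i.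
  by apply/matrixP => a b; rewrite !mxE; ring.
by rewrite mulNmx opprK /sref subrK.
Qed.

Lemma W0_sref i : W0 A (sref A i).
Proof. by have := W0_gen i (W0_one A); rewrite mulmx1. Qed.

Definition refl_invariant (T : Type) (f : 'cV[int]_n -> T) :=
  forall i x, f (sref A i *m x) = f x.

Lemma W0_invariant (T : Type) (f : 'cV[int]_n -> T) w x :
  refl_invariant f -> W0 A w -> f (w *m x) = f x.
Proof.
move=> f_inv; elim=> [|i w' _ IH]; first by rewrite mul1mx.
by rewrite -mulmxA f_inv IH.
Qed.

Lemma orbit_invariant (T : Type) (f : 'cV[int]_n -> T) x y :
  refl_invariant f -> Defs.in_orbit A x y -> f y = f x.
Proof. by move=> f_inv [w [Ww ->]]; exact: W0_invariant. Qed.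

Lemma char_refl_invariantP (F : fieldType) (t : 'cV[int]_n -> F) :
  is_char t -> refl_invariant t <-> forall i, t (alpha A i) = 1.
Proof.
move=> t_char; have [_ tD] := t_char; split => [t_inv i | t_alpha i x].
  have := t_inv i (omega i); rewrite srefE mxE eqxx scale1r tD charN //.
  rewrite -[RHS]mulr1 => /(mulfI (char_neq0 t_char _)) /(congr1 GRing.inv).
  by rewrite invrK invr1.
by rewrite srefE -scaleNr tD charZ // t_alpha exp1rz mulr1.
Qed.

Lemma center_GE (F : fieldType) (s : 'rV[F]_n) :
  center_G A s <-> torus s /\ forall j, ev (alpha A j) s = 1.
Proof.
split=> [[s_torus s_roots] | [s_torus s_alpha]].
  split=> // j; apply: s_roots; exists 1%:M, j; split; [exact: W0_one | by rewrite mul1mx].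
split=> // _ [w [j [Ww ->]]]; rewrite (W0_invariant (f := fun x => ev x s)) //.
exact/(char_refl_invariantP (ev_char s_torus)).
Qed.

Lemma center_refl_invariant (F : fieldType) (s : 'rV[F]_n) :
  center_G A s -> refl_invariant (fun x => ev x s).
Proof.
by case/center_GE => s_torus s_alpha; apply/(char_refl_invariantP (ev_char s_torus)).
Qed.

Lemma ev_center_cartan (F : fieldType) (s : 'rV[F]_n) v :
  center_G A s -> ev (A *m v) s = 1.
Proof.
case/center_GE => s_torus s_alpha.
have -> : A *m v = \sum_j v j ord0 *: alpha A j.
  apply/matrixP => a b; rewrite ord1 !mxE summxE; apply: eq_bigr => j _.
  by rewrite !mxE mulrC.
have ev_s := ev_char s_torus.
rewrite (char_sum ev_s) big1 // => j _.
by rewrite (charZ ev_s) s_alpha exp1rz.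
Qed.

End Reflections.

Section OneDimensional.
Variables (n : nat) (A : 'M[int]_n) (F : fieldType) (chi : 'cV[int]_n -> 'M[int]_n -> F).
Hypotheses (chi1 : chi 0 1%:M = 1)
  (chiM : forall x w x' w', W0 A w -> W0 A w' ->
            chi (x + w *m x') (w *m w') = chi x w * chi x' w').

Lemma one_dim_char : is_char (fun y => chi y 1%:M).
Proof.
by split=> // x y /=; rewrite -chiM ?mul1mx ?mulmx1 //; exact: W0_one.
Qed.

Lemma one_dim_refl_invariant :
  (forall i, A i i = 2) -> refl_invariant A (fun y => chi y 1%:M).
Proof.
move=> Aii i x; have Wi := W0_sref A i; have W1 := W0_one A.
have chi_si_neq0 : chi 0 (sref A i) != 0.
  apply/eqP => chi0; move: (chiM 0 0 Wi Wi); rewrite mulmx0 addr0 sref_invol // chi1 chi0.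
  by rewrite mulr0 => /eqP; rewrite oner_eq0.
apply: (mulIf chi_si_neq0); rewrite -[LHS](chiM _ 0 W1 Wi) mulrC -[RHS](chiM 0 _ Wi W1).
by rewrite mulmx0 addr0 mul1mx add0r mulmx1.
Qed.

End OneDimensional.

Lemma admits_center n (A : 'M[int]_n) (F : fieldType) (s : 'rV[F]_n) :
  (forall i, A i i = 2) -> admits_1dim A s ->
  exists2 z, center_G A z & cchar A s = cchar A z.
Proof.
move=> Aii [chi [chi1 chiM chiO]].
have t_char := one_dim_char chi1 chiM; set t := fun y => chi y 1%:M in t_char.
have t_inv : refl_invariant A t := one_dim_refl_invariant chi1 chiM Aii.
exists (\row_i t (omega i)).
  apply/center_GE; split=> [|j]; first exact: char_torus.
  by rewrite -(charE t_char); apply: (char_refl_invariantP A t_char).1.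
apply: funext => x; rewrite /cchar; case: ifP => // x_dom.
rewrite -chiO //; apply: f_equal; exact: funext (charE t_char).
Qed.

Lemma center_admits n (A : 'M[int]_n) (F : fieldType) (s : 'rV[F]_n) :
  center_G A s -> admits_1dim A s.
Proof.
move=> s_center; have [s_torus _] := s_center.
have [ev0 evD] := ev_char s_torus.
exists (fun x _ => ev x s); split=> // x w x' w' Ww _.
by rewrite evD (W0_invariant _ (center_refl_invariant s_center) Ww).
Qed.

Lemma exprz_eq1_absz (R : unitRingType) (z : R) (k : int) :
  z ^ k = 1 -> z ^+ `|k|%N = 1.
Proof.
case: k => k /=; first by rewrite -exprnP.
by rewrite NegzE -invr_expz -exprnP => /eqP; rewrite invr_eq1 => /eqP.
Qed.

Lemma center_finite n (A : 'M[int]_n) (F : closedFieldType) :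
  \det A != 0 -> exists L : seq 'rV[F]_n, forall s, center_G A s -> s \in L.
Proof.
move=> detA_neq0; have detA_gt0 : (0 < `|\det A|)%N by rewrite absz_gt0.
have [rs rsP] := roots_of_unity_cover F detA_gt0.
have [L LP] := mx_cover 0 rs 1 n; exists L => s s_center; apply: LP => a i.
rewrite ord1; apply/rsP/exprz_eq1_absz.
have [s_torus _] := s_center.
rewrite -(ev_omega s) -(charZ (ev_char s_torus)) -mul_scalar_mx -mul_mx_adj -mulmxA.
exact: ev_center_cartan.
Qed.

Section CartanForm.
Variables (n : nat) (A : 'M[int]_n) (d : 'I_n -> rat).

Definition cform (u v : 'I_n -> rat) : rat :=
  \sum_i \sum_j u i * d i * (A i j)%:~R * v j.

Hypotheses (Aii : forall i, A i i = 2) (d_pos : forall i, 0 < d i)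
  (d_sym : forall i j, d i * (A i j)%:~R = d j * (A j i)%:~R)
  (cform_pos : forall v, (exists i, v i != 0) -> 0 < cform v v).

Lemma cformC u v : cform u v = cform v u.
Proof.
rewrite /cform exchange_big; apply: eq_bigr => a _; apply: eq_bigr => b _.
transitivity (u b * (d b * (A b a)%:~R) * v a); first by rewrite !mulrA.
by rewrite d_sym; ring.
Qed.

Lemma cform_ge0 v : 0 <= cform v v.
Proof.
have [/existsP [i vi] | /existsPn v0] := boolP [exists i, v i != 0].
  by apply/ltW/cform_pos; exists i.
rewrite /cform big1 // => i _; rewrite big1 // => j _.
by move/negPn/eqP: (v0 i) => ->; rewrite !mul0r.
Qed.

Lemma cform_subZ u v r :
  cform (fun k => u k - r * v k) (fun k => u k - r * v k)
  = cform u u - 2 * r * cform u v + r ^+ 2 * cform v v.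
Proof.
have -> : cform (fun k => u k - r * v k) (fun k => u k - r * v k)
    = cform u u + (- r) * cform u v + (- r) * cform v u + r ^+ 2 * cform v v.
  rewrite /cform !mulr_sumr -!big_split; apply: eq_bigr => i _.
  rewrite !mulr_sumr -!big_split; apply: eq_bigr => j _ /=; ring.
by rewrite (cformC v u); ring.
Qed.

Lemma cform_CauchySchwarz u v : cform u v ^+ 2 <= cform u u * cform v v.
Proof.
have disc_ge0 r : 0 <= cform u u - 2 * r * cform u v + r ^+ 2 * cform v v.
  by rewrite -cform_subZ cform_ge0.
move: disc_ge0 (cform_ge0 v); set a := cform u u; set b := cform u v.
set c := cform v v => disc_ge0; rewrite le_eqVlt => /orP [/eqP c0 | c_gt0].
  have [-> | b_neq0] := eqVneq b 0; first by rewrite expr0n /= mulr_ge0 ?cform_ge0.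
  have := disc_ge0 ((a + 1) / (2 * b)); rewrite -c0 mulr0 addr0.
  have -> : a - 2 * ((a + 1) / (2 * b)) * b = -1 by field; rewrite b_neq0.
  by rewrite oppr_ge0 ler10.
have := disc_ge0 (b / c); have c_neq0 : c != 0 by rewrite gt_eqF.
have -> : a - 2 * (b / c) * b + (b / c) ^+ 2 * c = (a * c - b ^+ 2) / c by field.
by rewrite pmulr_lge0 ?invr_gt0 // subr_ge0.
Qed.

Lemma det_cartan_neq0 : \det A != 0.
Proof.
apply/negP => /eqP detA0.
have : \det (map_mx intr A : 'M[rat]_n)^T == 0 by rewrite det_tr det_map_mx detA0 rmorph0.
case/det0P => v v_neq0 vA0; pose w i := v ord0 i.
have Aw0 i : \sum_j (A i j)%:~R * w j = 0.
  have := congr1 (fun M : 'rV[rat]_n => M ord0 i) vA0; rewrite !mxE => vA0i.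
  by apply: etrans vA0i; apply: eq_bigr => j _; rewrite !mxE mulrC.
have : 0 < cform w w.
  apply: cform_pos; apply/existsP; apply: contraNT v_neq0 => /existsPn w0.
  by apply/eqP/rowP => i; rewrite mxE; exact/eqP/negPn.
rewrite /cform big1 ?ltxx // => i _.
under eq_bigr => j _ do rewrite -!mulrA.
by rewrite -mulr_sumr -mulr_sumr Aw0 !mulr0.
Qed.

Definition ratv (y : 'cV[int]_n) : 'I_n -> rat := fun k => (y k ord0)%:~R.

(* [\adj A *m y] is [\det A] times the coordinate vector of [y] in the basis of simple roots. *)
Definition qnorm (y : 'cV[int]_n) : rat :=
  cform (ratv (\adj A *m y)) (ratv (\adj A *m y)).

Lemma cform_ratv_r u w : cform u (ratv w) = \sum_i u i * d i * ((A *m w) i ord0)%:~R.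
Proof.
apply: eq_bigr => i _; rewrite mxE rmorph_sum mulr_sumr; apply: eq_bigr => j _.
by rewrite rmorphM /ratv /=; ring.
Qed.

Lemma cform_omega_l i w : cform (ratv (omega i)) (ratv w) = d i * ((A *m w) i ord0)%:~R.
Proof.
rewrite cform_ratv_r (bigD1 i) //= big1 ?addr0; first by rewrite /ratv mxE eqxx mul1r.
by move=> k /negbTE ki; rewrite /ratv mxE ki !mul0r.
Qed.

Lemma cform_adj_omega_r u k :
  cform u (ratv (\adj A *m omega k)) = u k * d k * (\det A)%:~R.
Proof.
rewrite cform_ratv_r mulmxA mul_mx_adj mul_scalar_mx (bigD1 k) //= big1 ?addr0.
  by rewrite !mxE eqxx mulr1.
by move=> j /negbTE jk; rewrite !mxE jk mulr0 !mulr0.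
Qed.

Lemma cartan_omega i : A *m omega i = alpha A i.
Proof.
apply/matrixP => a b; rewrite ord1 !mxE (bigD1 i) //= mxE eqxx mulr1 big1 ?addr0 //.
by move=> j /negbTE ji; rewrite mxE ji mulr0.
Qed.

Lemma adj_alpha i : \adj A *m alpha A i = \det A *: omega i.
Proof. by rewrite -cartan_omega mulmxA mul_adj_mx mul_scalar_mx. Qed.

Lemma qnorm_refl_invariant : refl_invariant A qnorm.
Proof.
move=> i y; rewrite /qnorm; set c := \adj A *m y.
set r : rat := (\det A * y i ord0)%:~R.
have -> : ratv (\adj A *m (sref A i *m y)) = fun k => ratv c k - r * ratv (omega i) k.
  apply: funext => k.
  rewrite srefE mulmxBr -scalemxAr adj_alpha scalerA /ratv /r !mxE rmorphB !rmorphM /=.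
  ring.
rewrite cform_subZ (cformC (ratv c)) !cform_omega_l /c mulmxA mul_mx_adj mul_scalar_mx.
by rewrite cartan_omega /alpha !mxE Aii /r; ring.
Qed.

Lemma adj_orbit_sqr_le x y k : Defs.in_orbit A x y ->
  ratv (\adj A *m y) k ^+ 2 <= qnorm x * qnorm (omega k) / (d k * (\det A)%:~R) ^+ 2.
Proof.
move=> xy; rewrite -(orbit_invariant qnorm_refl_invariant xy).
have := cform_CauchySchwarz (ratv (\adj A *m y)) (ratv (\adj A *m omega k)).
rewrite cform_adj_omega_r => CS.
have scale_gt0 : 0 < (d k * (\det A)%:~R) ^+ 2.
  by rewrite lt_def sqr_ge0 sqrf_eq0 mulf_neq0 ?intr_eq0 ?det_cartan_neq0 ?gt_eqF.
by rewrite ler_pdivlMr // -exprMn mulrA.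
Qed.

Lemma adj_orbit_bounded x :
  exists M : int, forall y, Defs.in_orbit A x y -> forall k, `|(\adj A *m y) k ord0| <= M.
Proof.
pose B k := qnorm x * qnorm (omega k) / (d k * (\det A)%:~R) ^+ 2.
exists (\sum_k `|Num.ceil (B k)|) => y xy k; set z := (\adj A *m y) k ord0.
have z_le_ceil : `|z| <= Num.ceil (B k).
  rewrite -(ler_int rat); apply: le_trans (Num.Theory.ceil_ge _).
  apply: le_trans (adj_orbit_sqr_le k xy); rewrite -rmorphXn ler_int.
  by rewrite int_norm_le_sqr.
apply: (le_trans z_le_ceil); apply: (le_trans (ler_norm _)).
by rewrite (bigD1 k) //= lerDl sumr_ge0.
Qed.

Lemma orbit_finite x :
  exists2 l, uniq l & forall y, y \in l <-> Defs.in_orbit A x y.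
Proof.
have [M adjM] := adj_orbit_bounded x; have [rs rsP] := int_bounded_cover M.
have [L LP] := mx_cover 0 rs n 1.
apply: (@uniq_enum_of_cover _ _ [seq \col_k ((A *m c) k ord0 %/ \det A)%Z | c <- L]).
move=> y xy; apply/mapP; exists (\adj A *m y).
  by apply: LP => k j; rewrite ord1; apply/rsP/adjM.
apply/matrixP => k j; rewrite ord1 mxE mulmxA mul_mx_adj mul_scalar_mx mxE.
by rewrite mulKz ?det_cartan_neq0.
Qed.

End CartanForm.

Section CentralCharacters.
Variables (n : nat) (A : 'M[int]_n).
Hypothesis orbit_fin : forall x, exists2 l, uniq l & forall y, y \in l <-> Defs.in_orbit A x y.

Lemma orbit_sum_const x : exists2 N, (0 < N)%N &
  forall (R : nmodType) (f : 'cV[int]_n -> R) c,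
    (forall y, Defs.in_orbit A x y -> f y = c) -> orbit_sum A x f = c *+ N.
Proof.
rewrite /orbit_sum; case: excluded_middle_informative => [fin | not_fin]; last first.
  by have [l ul lP] := orbit_fin x; case: not_fin; exists l.
case: constructive_indefinite_description => l [_ lP] /=; exists (size l).
  have : x \in l by apply/lP; exists 1%:M; split; [exact: W0_one | rewrite mul1mx].
  by case: l {lP}.
move=> R f c fc; rewrite (eq_big_seq (fun=> c)) => [|y /lP]; last exact: fc.
by rewrite big_const_seq count_predT iter_addr_0.
Qed.

Lemma cchar_center_inj (F : fieldType) (s1 s2 : 'rV[F]_n) :
  [pchar F] =i pred0 -> center_G A s1 -> center_G A s2 ->
  cchar A s1 = cchar A s2 -> s1 = s2.
Proof.
move=> char0 s1_center s2_center /(congr1 (fun c => c (omega _))) cchar_eq.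
apply/rowP => i; have [N N_gt0 sumN] := orbit_sum_const (omega i).
have cchar_omega s : center_G A s -> cchar A s (omega i) = s ord0 i *+ N.
  move=> s_center; rewrite /cchar ifT; last by apply/forallP => j; rewrite mxE ler0n.
  apply: sumN => y xy; rewrite -ev_omega.
  exact: orbit_invariant (center_refl_invariant s_center) xy.
have N_neq0 : (N%:R : F) != 0 by rewrite ((pcharf0P F).1 char0) -lt0n.
apply: (mulIf N_neq0); rewrite !mulr_natr -!cchar_omega //; exact: cchar_eq.
Qed.

End CentralCharacters.

Theorem corollary2p2 (n : nat) (A : 'M[int]_n) (F : closedFieldType) :
  (0 < n)%N -> cartan_irreducible A -> [pchar F] =i pred0 ->
  exists k : nat,
    card_is (fun c : 'cV[int]_n -> F =>
               exists s : 'rV[F]_n, torus s /\ admits_1dim A s /\ c = cchar A s) k /\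
    card_is (fun s : 'rV[F]_n => center_G A s) k.
Proof.
move=> _ [Aii _ _ _ [d [d_pos d_sym cform_pos]]] char0.
have [L LP] := center_finite F (det_cartan_neq0 cform_pos).
have [l ul lP] := uniq_enum_of_cover LP.
have card_center := card_is_uniq ul lP.
exists (size l); split=> //.
apply: (card_is_image (g := fun s => cchar A s) card_center).
  move=> s1 s2; apply: (cchar_center_inj _ char0).
  exact: orbit_finite Aii d_pos d_sym cform_pos.
move=> c; split=> [[s [_ [s_adm ->]]] | [z z_center ->]].
  by have [z] := admits_center Aii s_adm; exists z.
by exists z; split; [case: z_center | split; first exact: center_admits].
Qed.
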